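(* Let $P=(p_1,\dots,p_n)$ be a configuration of length $n$. If there exist $i,j\in\{1,\dots,n\}$ such that $p_j=p_i+i$, then $P$ is not unique.
   Context: For a real sequence $A=(a_1,\dots,a_n)$, a configuration is a sequence $P=(p_1,\dots,p_n)$ with $p_\ell\in\{1,\dots,n-\ell+1\}$ for each $\ell$; $P$ is an output configuration for $A$ if for every $\ell=1,\dots,n$ the sum $a_{p_\ell}+\dots+a_{p_\ell+\ell-1}$ is maximum among all sums of $\ell$ consecutive entries of $A$. A configuration $P$ is unique if there exists $A\in\mathbb{R}^n$ whose only output configuration is $P$ (equivalently, for every $\ell$ the block of length $\ell$ starting at $p_\ell$ has sum strictly larger than every other block of length $\ell$). *)

From Stdlib Require Import Reals.
From HB Require Import structures.
From mathcomp Require Import all_boot all_order all_algebra.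
From mathcomp Require Import Rstruct.
Set Implicit Arguments. Unset Strict Implicit. Unset Printing Implicit Defensive.
Import Order.TTheory GRing.Theory Num.Theory.
Local Open Scope ring_scope.
Local Open Scope nat_scope.

(* A real sequence a_1..a_n is a function A : nat -> R (only indices 1..n used).
   A configuration P = (p_1..p_n) is a function P : nat -> nat (only 1..n used). *)

Definition block_sum (A : nat -> R) (p l : nat) : R :=
  \big[+%R/0%R]_(p <= k < p + l) A k.

Definition configuration (n : nat) (P : nat -> nat) : Prop :=
  forall l, 1 <= l <= n -> 1 <= P l <= n - l + 1.

Definition output_configuration (n : nat) (A : nat -> R) (P : nat -> nat) : Prop :=
  configuration n P /\
  forall l, 1 <= l <= n -> forall q, 1 <= q <= n - l + 1 ->
    (block_sum A q l <= block_sum A (P l) l)%O.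

Definition unique_configuration (n : nat) (P : nat -> nat) : Prop :=
  configuration n P /\
  exists A : nat -> R,
    output_configuration n A P /\
    forall Q, output_configuration n A Q -> forall l, 1 <= l <= n -> Q l = P l.

From mathcomp Require Import all_boot.
From Stdlib Require Import Reals.
From mathcomp Require Import all_order all_algebra Rstruct.
From mathcomp Require Import zify.
Import Order.TTheory GRing.Theory Num.Theory.

Set Implicit Arguments.
Unset Strict Implicit.

(* The stretch of length i + j starting at p_i can be cut in two ways: as the
   block of length i at p_i followed by the block of length j at p_j = p_i + i,
   or as the block of length j at p_i followed by the block of length i at
   p_i + j.  For a unique P, each block of the first cut strictly beats the
   block of the same length in the second cut, so the two (equal) totals would
   differ. *)

Lemma block_sum_cat (A : nat -> R) (p a b : nat) :
  block_sum A p (a + b) = (block_sum A p a + block_sum A (p + a) b)%R.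
Proof. by rewrite /block_sum addnA (@big_cat_nat _ _ _ (p + a)) // leq_addr. Qed.

Lemma output_configuration_set (n : nat) (A : nat -> R) (P : nat -> nat)
    (l q : nat) :
  output_configuration n A P -> 1 <= q <= n - l + 1 ->
  block_sum A q l = block_sum A (P l) l ->
  output_configuration n A (fun k => if k == l then q else P k).
Proof.
move=> [cP maxP] hq eq_q; split=> k; case: eqP => [-> | _] hk //.
- exact: cP.
- by rewrite eq_q; exact: maxP hk.
- exact: maxP hk.
Qed.

Lemma unique_output_lt (n : nat) (A : nat -> R) (P : nat -> nat) (l q : nat) :
  output_configuration n A P ->
  (forall Q, output_configuration n A Q -> forall k, 1 <= k <= n -> Q k = P k) ->
  1 <= l <= n -> 1 <= q <= n - l + 1 -> q != P l ->
  (block_sum A q l < block_sum A (P l) l)%R.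
Proof.
move=> oP onlyP hl hq q_neq; rewrite lt_neqAle (oP.2 l hl q hq) andbT.
apply: contra q_neq => /eqP eq_q.
have := onlyP _ (output_configuration_set oP hq eq_q) l hl.
by rewrite eqxx => ->.
Qed.

Theorem proposition1 (n : nat) (P : nat -> nat) :
  configuration n P ->
  (exists i j, [/\ 1 <= i <= n, 1 <= j <= n & P j = P i + i]) ->
  ~ unique_configuration n P.
Proof.
move=> cP [i [j [hi hj Pj]]] [_ [A [oA onlyP]]].
have [hPi hPj] := (cP i hi, cP j hj); rewrite Pj in hPj.
have lt_j : (block_sum A (P i) j < block_sum A (P j) j)%R.
  by apply: (unique_output_lt oA onlyP); rewrite // ?Pj; lia.
have lt_i : (block_sum A (P i + j) i < block_sum A (P i) i)%R.
  by apply: (unique_output_lt oA onlyP) => //; lia.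
have := ltrD lt_j lt_i.
by rewrite -block_sum_cat (addrC (block_sum A (P j) j)) Pj -block_sum_cat (addnC j i) ltxx.
Qed.
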